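(* There exists $\delta>0$ such that the family of NSG-compositions $x_1+\cdots+x_{m-1}$ with maximum $4$ whose last maximal part $x_l=4$ (i.e. $x_l=4$ and $x_i\le3$ for $i>l$) satisfies $m-1-l\le\delta(m-1)$ has growth-rate strictly smaller than $\omega=\frac{1+\sqrt5}2$.
   Context: An NSG-composition is a composition $x_1+\cdots+x_{m-1}$ of positive integers satisfying $x_{s+t}\le x_s+x_t$ and $x_{m-s-t}\le x_{m-s}+x_{m-t}+1$ for all $s,t\ge1$, $s+t<m$ (equivalently, the Kunz vector of a numerical semigroup of multiplicity $m$); its genus is $\sum x_j$. The growth-rate of a family is $\limsup_{g\to\infty}a_g^{1/g}$ with $a_g$ the number of members of genus $g$. *)

From HB Require Import structures.
From mathcomp Require Import all_boot all_order all_algebra.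
From mathcomp Require Import all_classical all_reals all_analysis.
Set Implicit Arguments. Unset Strict Implicit. Unset Printing Implicit Defensive.
Import Order.TTheory GRing.Theory Num.Theory.

(* A composition x_1 + ... + x_{m-1} is a list x of size m-1; x_j (1-based)
   is [xj x j] = nth 0 x (j-1). *)
Definition xj (x : seq nat) (j : nat) : nat := nth 0 x j.-1.

(* NSG condition (Kunz vector of a numerical semigroup of multiplicity m). *)
Definition nsg (x : seq nat) : bool :=
  let m := (size x).+1 in
  all (fun s => all (fun t =>
        (s + t < m) ==>
        ((xj x (s + t) <= xj x s + xj x t) &&
         (xj x (m - s - t) <= xj x (m - s) + xj x (m - t) + 1)))
      (iota 1 m)) (iota 1 m).

Definition is_comp (x : seq nat) : bool := all (fun k => 0 < k) x.

Definition genus (x : seq nat) : nat := sumn x.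

Fixpoint seqs_len (n b : nat) : seq (seq nat) :=
  match n with
  | 0 => [:: [::]]
  | n'.+1 => [seq k :: s | k <- iota 0 b.+1, s <- seqs_len n' b]
  end.

(* Every composition of genus g has at most g parts, each at most g, so it
   occurs exactly once in this list. *)
Definition candidates (g : nat) : seq (seq nat) :=
  flatten [seq seqs_len n g | n <- iota 0 g.+1].

Definition count_genus (P : pred (seq nat)) (g : nat) : nat :=
  count (fun x => [&& is_comp x, genus x == g & P x]) (candidates g).

Definition growth_rate (R : realType) (P : pred (seq nat)) : \bar R :=
  limn_esup (fun g => (((count_genus P g)%:R : R) `^ (g%:R^-1))%:E).

Definition fam (R : realType) (delta : R) (x : seq nat) : bool :=
  [&& nsg x, \max_(i <- x) i == 4 &
   has (fun l => [&& 1 <= l, l <= size x, xj x l == 4,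
                  all (fun i => xj x i <= 3) (iota l.+1 (size x - l)) &
                  ((size x - l)%:R <= delta * (size x)%:R)%R])
       (iota 0 (size x).+1)].

From mathcomp Require Import all_boot all_order all_algebra.
From mathcomp Require Import all_classical all_reals all_analysis.
Import Order.TTheory GRing.Theory Num.Theory.
From mathcomp Require Import ring lra zify.
Set Implicit Arguments. Unset Strict Implicit. Unset Printing Implicit Defensive.

(* Weight each composition by [rho ^+ genus] with [rho = 31/50], slightly above
   [1/omega]; it suffices that the members of genus [g] have total weight
   polynomial in [g], for then [a_g <= poly g * rho ^- g].
   Fold the parts before the last maximal part [x_l = 4] into pairs
   [(x_j, x_{l-j})]; subadditivity gives [x_j + x_{l-j} >= 4].  If [x_d = 1] is
   the first part equal to 1, the pairs before it have [x_j >= 2], and from it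
   on pairs [d] apart are constrained by [x_{j+d} <= x_j + 1] and
   [x_{l-j} <= x_{l-j-d} + 1].  Weighted pair sums under these local
   constraints decay like [mu ^+ (l/2)] with [mu < 1], which beats the weight
   [(rho + rho^2 + rho^3 + rho^4) ^+ (m-1-l)] of the suffix as soon as
   [m-1-l <= (m-1)/101]. *)

Section Words.
Variable T : eqType.

Fixpoint words (A : seq T) (k : nat) : seq (seq T) :=
  if k is k'.+1 then [seq a :: s | a <- A, s <- words A k'] else [:: [::]].

Lemma wordsS A k : words A k.+1 = [seq a :: s | a <- A, s <- words A k].
Proof. by []. Qed.

Lemma mem_words A k s : (s \in words A k) = (size s == k) && all (mem A) s.
Proof.
elim: k s => [|k IH] s; first by case: s.
apply/allpairsP/idP.
  by case=> -[a t] /= [aA]; rewrite IH => /andP[/eqP <- tA] ->; rewrite /= eqxx aA.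
case: s => [|a s] //= /andP[sk /andP[aA sA]].
by exists (a, s); rewrite /= IH -(eqSS (size s)) sk sA aA.
Qed.

Lemma size_words A k s : s \in words A k -> size s = k.
Proof. by rewrite mem_words => /andP[/eqP]. Qed.

Lemma words_uniq A k : uniq A -> uniq (words A k).
Proof.
move=> uA; elim: k => [|k IH] //=.
by apply: allpairs_uniq => // -[a s] [b t] _ _ /= [-> ->].
Qed.

End Words.

Section WordSums.
Variables (R : comNzRingType) (T : eqType).
Local Open Scope ring_scope.

Lemma big_words_add (A : seq T) a b (H : seq T -> R) :
  \sum_(s <- words A (a + b)) H s =
  \sum_(u <- words A a) \sum_(v <- words A b) H (u ++ v).
Proof.
elim: a H => [|a IH] H; first by rewrite add0n big_seq1.
rewrite addSn /= !big_allpairs_dep /=; apply: eq_bigr => c _.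
exact: (IH (fun s => H (c :: s))).
Qed.

Lemma sum_prod_words (A : seq T) k (f : T -> R) :
  \sum_(s <- words A k) \prod_(c <- s) f c = (\sum_(c <- A) f c) ^+ k.
Proof.
elim: k => [|k IH]; first by rewrite big_seq1 big_nil expr0.
rewrite /= big_allpairs_dep exprS mulr_suml; apply: eq_bigr => c _.
by rewrite -IH mulr_sumr; apply: eq_bigr => s _; rewrite big_cons.
Qed.

Lemma prod_if_all (q : pred T) (f : T -> R) s :
  \prod_(c <- s) (if q c then f c else 0) = if all q s then \prod_(c <- s) f c else 0.
Proof.
elim: s => [|c s IH]; first by rewrite !big_nil.
rewrite !big_cons /= IH.
by case: (q c); case: (all q s); rewrite ?mul0r ?mulr0.
Qed.

Lemma if_and_mul (a b : bool) (x y : R) :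
  (if a && b then x * y else 0) = (if a then x else 0) * (if b then y else 0).
Proof. by case: a; case: b; rewrite ?mul0r ?mulr0. Qed.

End WordSums.

(* A pair (a, b) stands for the two parts x_j and x_{l-j} folded onto each
   other around the last maximal part x_l = 4. *)
Definition pairs4 : seq (nat * nat) := [seq (a, b) | a <- iota 1 4, b <- iota 1 4].
Definition pair_words k := words pairs4 k.

Definition wide (c : nat * nat) : bool := 4 <= c.1 + c.2.
Definition wide2 (c : nat * nat) : bool := wide c && (2 <= c.1).

(* With x_d = 1, subadditivity gives x_{j+d} <= x_j + 1 and x_{l-j} <= x_{l-j-d} + 1:
   this is the constraint between the pairs j and j + d. *)
Definition lagged (c c' : nat * nat) : bool := (c'.1 <= c.1 + 1) && (c.2 <= c'.2 + 1).
Definition zip_lagged (u w : seq (nat * nat)) : bool :=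
  all (fun q => lagged q.1 q.2) (zip u w).

(* Only the blocks 2k and 2k+1 (of length d) are required to be lagged: this
   relaxation makes the weighted count factor over pairs of blocks.  The
   argument [f] is fuel. *)
Fixpoint lag_blocks (d f : nat) (B : seq (nat * nat)) : bool :=
  if f is f'.+1 then
    zip_lagged (take d B) (take d (drop d B)) && lag_blocks d f' (drop (d + d) B)
  else true.

Lemma lag_blocks_nil d f : lag_blocks d f [::].
Proof. by elim: f => //= f ->; rewrite /zip_lagged !take_nil. Qed.

Lemma lag_blocks_fuel d f f' B : 0 < d -> size B <= f -> size B <= f' ->
  lag_blocks d f B = lag_blocks d f' B.
Proof.
move=> d0; elim: f f' B => [|f IH] [|f'] B //=.
- by rewrite leqn0 => /nilP -> _; rewrite lag_blocks_nil.
- by move=> _; rewrite leqn0 => /nilP ->; rewrite lag_blocks_nil.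
- by move=> h1 h2; congr (_ && _); apply: IH; rewrite size_drop; lia.
Qed.

Lemma lag_blocks_all d B f : 0 < d ->
  (forall j, j + d < size B -> lagged (nth (0,0) B j) (nth (0,0) B (j + d))) ->
  lag_blocks d f B.
Proof.
move=> d0; elim: f B => [|f IH] B H //=.
apply/andP; split.
  apply/(all_nthP ((0,0),(0,0))) => j hj; rewrite nth_zip_cond hj.
  move: hj; rewrite size_zip !size_take_min size_drop => hj.
  rewrite /= nth_take; last by lia.
  rewrite nth_take; last by lia.
  by rewrite nth_drop addnC; apply: H; lia.
apply: IH => j; rewrite size_drop => hj.
rewrite !nth_drop; have -> : d + d + (j + d) = (d + d + j) + d by lia.
by apply: H; lia.
Qed.

Section PairWeights.
Variables (R : realFieldType) (r : R).
Local Open Scope ring_scope.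

Definition pair_weight (c : nat * nat) : R := r ^+ (c.1 + c.2).
Definition wide_weight c := if wide c then pair_weight c else 0.
Definition wide2_weight c := if wide2 c then pair_weight c else 0.

Definition wide_mass := \sum_(c <- pairs4) wide_weight c.
Definition wide2_mass := \sum_(c <- pairs4) wide2_weight c.
Definition lagged_mass := \sum_(c <- pairs4) \sum_(c' <- pairs4)
   (if lagged c c' then wide_weight c * wide_weight c' else 0).

Definition zip_lagged_sum a b := \sum_(u <- pair_words a) \sum_(w <- pair_words b)
   (if zip_lagged u w then \prod_(c <- u) wide_weight c * \prod_(c <- w) wide_weight c else 0).
Definition block_sum d N := \sum_(B <- pair_words N)
   (if lag_blocks d N B then \prod_(c <- B) wide_weight c else 0).

Lemma zip_lagged_sum_diag b : zip_lagged_sum b b = lagged_mass ^+ b.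
Proof.
elim: b => [|b IH]; first by rewrite /zip_lagged_sum /= !big_seq1 !big_nil mulr1 expr0.
rewrite exprS -IH /zip_lagged_sum /lagged_mass /pair_words wordsS big_allpairs_dep mulr_suml.
apply: eq_bigr => c _.
under eq_bigr do rewrite big_allpairs_dep.
rewrite exchange_big mulr_suml; apply: eq_bigr => c' _.
rewrite mulr_sumr; apply: eq_bigr => u _.
rewrite mulr_sumr; apply: eq_bigr => w _.
rewrite /zip_lagged /= -/(zip_lagged u w) if_and_mul !big_cons.
by case: (lagged c c'); case: (zip_lagged u w); rewrite ?mul0r ?mulr0 //; ring.
Qed.

Lemma zip_lagged_cat u1 u2 w :
  size u1 = size w -> zip_lagged (u1 ++ u2) w = zip_lagged u1 w.
Proof.
move=> h; rewrite /zip_lagged -[w]cats0 zip_cat // all_cat.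
by rewrite cats0; case: u2 => [|? ?]; rewrite /= ?andbT.
Qed.

Lemma zip_lagged_sum_addl e k :
  zip_lagged_sum (e + k) e = lagged_mass ^+ e * wide_mass ^+ k.
Proof.
rewrite -zip_lagged_sum_diag /zip_lagged_sum /pair_words big_words_add mulr_suml.
apply: eq_big_seq => u1 Hu1; rewrite exchange_big mulr_suml.
apply: eq_big_seq => w Hw.
rewrite -(sum_prod_words _ _ wide_weight) mulr_sumr; apply: eq_bigr => u2 _.
rewrite zip_lagged_cat; last by rewrite (size_words Hu1) (size_words Hw).
by rewrite big_cat /=; case: (zip_lagged u1 w); rewrite ?mul0r //; ring.
Qed.

Lemma block_sum_step d e : (0 < d)%N ->
  block_sum d (d + (d + e)) = lagged_mass ^+ d * block_sum d e.
Proof.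
move=> d0; rewrite -zip_lagged_sum_diag /block_sum /zip_lagged_sum /pair_words.
rewrite big_words_add mulr_suml.
apply: eq_big_seq => u1 Hu1; rewrite big_words_add mulr_suml.
apply: eq_big_seq => u2 Hu2; rewrite mulr_sumr; apply: eq_big_seq => u3 Hu3.
have s1 := size_words Hu1; have s2 := size_words Hu2; have s3 := size_words Hu3.
have -> : (d + (d + e) = (d.-1 + (d + e)).+1)%N by lia.
rewrite [lag_blocks _ _.+1 _]/= take_size_cat // drop_size_cat // take_size_cat //.
rewrite -drop_drop drop_size_cat // drop_size_cat //.
rewrite (@lag_blocks_fuel _ _ e) //; try by rewrite s3; lia.
rewrite !big_cat /= if_and_mul.
by case: (zip_lagged _ _); case: (lag_blocks _ _ _); rewrite ?mul0r ?mulr0 //; ring.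
Qed.

Lemma block_sum_short d N : (N <= d)%N -> block_sum d N = wide_mass ^+ N.
Proof.
move=> hN; rewrite /block_sum -(sum_prod_words _ _ wide_weight).
apply: eq_big_seq => B HB; have sB := size_words HB.
case: N hN sB HB => [|N] hN sB HB //=.
rewrite take_oversize ?sB // drop_oversize ?sB // drop_oversize ?sB; last by lia.
by rewrite lag_blocks_nil /zip_lagged; case: (B).
Qed.

Lemma block_sum_mid d e : (e < d)%N -> block_sum d (d + e) = zip_lagged_sum d e.
Proof.
move=> he; rewrite /block_sum /zip_lagged_sum /pair_words big_words_add.
apply: eq_big_seq => u1 Hu1; apply: eq_big_seq => u2 Hu2.
have s1 := size_words Hu1; have s2 := size_words Hu2.
have -> : (d + e = (d.-1 + e).+1)%N by lia.
rewrite [lag_blocks _ _.+1 _]/= take_size_cat // drop_size_cat //.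
rewrite take_oversize; last by rewrite s2 ltnW.
rewrite -drop_drop drop_size_cat // drop_oversize; last by rewrite s2 ltnW.
by rewrite lag_blocks_nil andbT big_cat.
Qed.

Hypothesis r_ge0 : 0 <= r.

Lemma pair_weight_ge0 c : 0 <= pair_weight c. Proof. exact: exprn_ge0. Qed.
Lemma wide_weight_ge0 c : 0 <= wide_weight c.
Proof. by rewrite /wide_weight; case: ifP => // _; apply: pair_weight_ge0. Qed.
Lemma wide2_weight_ge0 c : 0 <= wide2_weight c.
Proof. by rewrite /wide2_weight; case: ifP => // _; apply: pair_weight_ge0. Qed.
Lemma wide_mass_ge0 : 0 <= wide_mass.
Proof. by apply: sumr_ge0 => c _; apply: wide_weight_ge0. Qed.
Lemma wide2_mass_ge0 : 0 <= wide2_mass.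
Proof. by apply: sumr_ge0 => c _; apply: wide2_weight_ge0. Qed.
Lemma lagged_mass_ge0 : 0 <= lagged_mass.
Proof.
apply: sumr_ge0 => c _; apply: sumr_ge0 => c' _; case: ifP => // _.
by apply: mulr_ge0; apply: wide_weight_ge0.
Qed.
Lemma block_sum_ge0 d N : 0 <= block_sum d N.
Proof.
apply: sumr_ge0 => B _; case: ifP => // _.
by apply: prodr_ge0 => c _; apply: wide_weight_ge0.
Qed.

Variables th la mu : R.
Hypotheses (th_ge0 : 0 <= th) (la_ge1 : 1 <= la).
Hypotheses (lagged_mass_le : lagged_mass <= th ^+ 2)
           (wide_mass_le : wide_mass <= la * th).

Let la_ge0 : 0 <= la. Proof. exact: le_trans la_ge1. Qed.

Lemma exp_lagged_mass_le e : lagged_mass ^+ e <= th ^+ (e + e).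
Proof.
rewrite addnn -mul2n exprM.
by apply: lerXn2r; rewrite ?nnegrE ?exprn_ge0 ?lagged_mass_ge0.
Qed.

Lemma exp_wide_mass_le k : wide_mass ^+ k <= (la * th) ^+ k.
Proof. by apply: lerXn2r; rewrite ?nnegrE ?mulr_ge0 ?wide_mass_ge0. Qed.

(* Each pair of consecutive blocks contributes [lagged_mass ^+ d <= th ^+ (2 d)];
   the factor [la ^+ d] pays for an unpaired last block. *)
Lemma block_sum_le d N : (0 < d)%N -> block_sum d N <= th ^+ N * la ^+ d.
Proof.
move=> d0; elim/ltn_ind: N => N IH.
case: (leqP (d + d) N) => hN.
  have -> : N = (d + (d + (N - (d + d))))%N by lia.
  rewrite block_sum_step //.
  have h1 : block_sum d (N - (d + d)) <= th ^+ (N - (d + d)) * la ^+ d by apply: IH; lia.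
  apply: le_trans (ler_pM (exprn_ge0 _ lagged_mass_ge0) (block_sum_ge0 _ _)
                          (exp_lagged_mass_le d) h1) _.
  by rewrite mulrA -exprD addnA.
case: (leqP N d) => hNd.
  rewrite block_sum_short //; apply: le_trans (exp_wide_mass_le N) _.
  rewrite exprMn mulrC; apply: ler_wpM2l; first exact: exprn_ge0.
  exact: ler_weXn2l.
set e := (N - d)%N; set k := (d - e)%N.
have -> : N = (d + e)%N by rewrite /e; lia.
have hd : d = (e + k)%N by rewrite /k /e; lia.
rewrite block_sum_mid; last by rewrite /e; lia.
rewrite {1}hd zip_lagged_sum_addl.
apply: le_trans (ler_pM (exprn_ge0 _ lagged_mass_ge0) (exprn_ge0 _ wide_mass_ge0)
                        (exp_lagged_mass_le e) (exp_wide_mass_le k)) _.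
have -> : th ^+ (e + e) * (la * th) ^+ k = th ^+ (d + e) * la ^+ k.
  by rewrite exprMn mulrCA -exprD mulrC hd; congr (_ * _); congr (_ ^+ _); lia.
apply: ler_wpM2l; first exact: exprn_ge0.
by apply: ler_weXn2l; rewrite // hd leq_addl.
Qed.

(* The folded pairs of the prefix before the last 4: those before the first
   pair (1, _), at index d.-1, have first part >= 2; from there on the pairs
   satisfy the lag-d block constraint. *)
Definition admissible d (p : seq (nat * nat)) :=
  [&& all wide2 (take d.-1 p), all wide (drop d.-1 p)
    & lag_blocks d (size (drop d.-1 p)) (drop d.-1 p)].
Definition admissible_sum d h :=
  \sum_(p <- pair_words h) (if admissible d p then \prod_(c <- p) pair_weight c else 0).

Lemma admissible_sum_long d h : (d.-1 <= h)%N ->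
  admissible_sum d h = wide2_mass ^+ d.-1 * block_sum d (h - d.-1).
Proof.
move=> hd; rewrite /admissible_sum.
have -> : h = (d.-1 + (h - d.-1))%N by lia.
rewrite /pair_words big_words_add addKn -(sum_prod_words _ _ wide2_weight) mulr_suml.
apply: eq_big_seq => u Hu; rewrite /block_sum mulr_sumr; apply: eq_big_seq => v Hv.
have su := size_words Hu; have sv := size_words Hv.
rewrite /admissible take_size_cat // drop_size_cat // sv big_cat /=.
rewrite (@if_and_mul _ (all wide2 u)) /wide2_weight prod_if_all; congr (_ * _).
by rewrite /wide_weight prod_if_all; case: (lag_blocks _ _ _); case: (all _ _).
Qed.

Lemma admissible_sum_short d h : (h < d.-1)%N -> admissible_sum d h = wide2_mass ^+ h.
Proof.
move=> hd; rewrite /admissible_sum -(sum_prod_words _ _ wide2_weight).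
apply: eq_big_seq => p Hp; have sp := size_words Hp.
rewrite /admissible take_oversize ?sp; last by lia.
rewrite drop_oversize ?sp; last by lia.
by rewrite /= ?lag_blocks_nil ?andbT /wide2_weight prod_if_all.
Qed.

Hypotheses (wide2_mass_le : wide2_mass * la <= mu) (th_le_mu : th <= mu).

Lemma admissible_sum_le d h : (0 < d)%N -> admissible_sum d h <= la * mu ^+ h.
Proof.
move=> d0; have mu0 : 0 <= mu by apply: le_trans th_le_mu.
case: (leqP d.-1 h) => hd; last first.
  rewrite admissible_sum_short //.
  have wide2_le_mu : wide2_mass <= mu.
    by apply: le_trans wide2_mass_le; rewrite ler_peMr ?wide2_mass_ge0.
  apply: le_trans (_ : mu ^+ h <= _).
    by apply: lerXn2r; rewrite ?nnegrE ?wide2_mass_ge0.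
  by rewrite ler_peMl ?exprn_ge0.
rewrite admissible_sum_long //.
apply: le_trans (ler_wpM2l (exprn_ge0 _ wide2_mass_ge0) (block_sum_le (h - d.-1) d0)) _.
have -> : wide2_mass ^+ d.-1 * (th ^+ (h - d.-1) * la ^+ d) =
          la * ((wide2_mass * la) ^+ d.-1 * th ^+ (h - d.-1)).
  by rewrite exprMn -(prednK d0) exprS; ring.
have -> : mu ^+ h = mu ^+ d.-1 * mu ^+ (h - d.-1) by rewrite -exprD subnKC.
apply: ler_wpM2l => //; apply: ler_pM; rewrite ?exprn_ge0 ?mulr_ge0 ?wide2_mass_ge0 //.
  by apply: lerXn2r; rewrite ?nnegrE ?mulr_ge0 ?wide2_mass_ge0.
by apply: lerXn2r; rewrite ?nnegrE.
Qed.

End PairWeights.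

Definition words4 n := words (iota 1 4) n.

(* Pairs x_j with x_{L+1-j} for 1 <= j <= L/2 (the middle part is dropped
   when L is odd). *)
Definition fold_pairs L (pre : seq nat) :=
  zip (take L./2 pre) (rev (drop (L - L./2) pre)).

Section CompositionWeights.
Variables (R : realFieldType) (r : R).
Local Open Scope ring_scope.

Definition part_mass := \sum_(a <- iota 1 4) r ^+ a.

Lemma expr_sumn (s : seq nat) : r ^+ sumn s = \prod_(a <- s) r ^+ a.
Proof.
by elim: s => [|a s IH]; rewrite ?big_nil ?big_cons //= exprD IH.
Qed.

Lemma sum_words4_expr n : \sum_(s <- words4 n) r ^+ sumn s = part_mass ^+ n.
Proof.
by rewrite -sum_prod_words; apply: eq_bigr => s _; apply: expr_sumn.
Qed.

Lemma sum_words4_rev n (H : seq nat -> R) :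
  \sum_(v <- words4 n) H (rev v) = \sum_(v <- words4 n) H v.
Proof.
rewrite -(big_map rev xpredT H); apply: perm_big.
have u4 : uniq (words4 n) by rewrite words_uniq // iota_uniq.
apply: uniq_perm => //; first by rewrite (map_inj_uniq (can_inj revK)).
move=> v; apply/mapP/idP.
  by case=> w; rewrite !mem_words => /andP[sw aw] ->; rewrite size_rev sw all_rev.
by move=> hv; exists (rev v); rewrite ?revK //; move: hv; rewrite !mem_words size_rev all_rev.
Qed.

Lemma sum_words4_zip h (H : seq (nat * nat) -> R) :
  \sum_(u <- words4 h) \sum_(v <- words4 h) H (zip u v) = \sum_(p <- pair_words h) H p.
Proof.
elim: h H => [|h IH] H; first by rewrite /words4 /pair_words /= !big_seq1.
rewrite /words4 /pair_words !wordsS big_allpairs_dep /pairs4 big_allpairs_dep big_allpairs.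
apply: eq_bigr => a _.
under eq_bigr do rewrite big_allpairs_dep.
rewrite exchange_big; apply: eq_bigr => b _ /=.
exact: (IH (fun p => H ((a, b) :: p))).
Qed.

Lemma expr_sumn_zip u v : size u = size v ->
  r ^+ (sumn u + sumn v) = \prod_(c <- zip u v) pair_weight r c.
Proof.
elim: u v => [|a u IH] [|b v] //= h; first by rewrite big_nil.
rewrite big_cons -IH; last by case: h.
by rewrite /pair_weight /= -exprD; congr (_ ^+ _); lia.
Qed.

Lemma sum_fold_admissible d L :
  \sum_(pre <- words4 L) (if admissible d (fold_pairs L pre) then r ^+ sumn pre else 0)
  = part_mass ^+ (L - L./2 - L./2) * admissible_sum r d L./2.
Proof.
rewrite /fold_pairs; set h := L./2; set m := (L - h - h)%N.
have E : L = (h + (m + h))%N by rewrite /m /h; lia.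
have E2 : (L - h = h + m)%N by rewrite /m /h; lia.
rewrite {1}E /words4 big_words_add.
transitivity (\sum_(u <- words (iota 1 4) h) \sum_(mm <- words (iota 1 4) m)
   r ^+ sumn mm * \sum_(v <- words (iota 1 4) h)
     (if admissible d (zip u v) then r ^+ (sumn u + sumn v) else 0)).
  apply: eq_big_seq => u Hu; rewrite big_words_add; apply: eq_big_seq => mm Hmm.
  have su := size_words Hu; have sm := size_words Hmm.
  rewrite -(sum_words4_rev h (fun v =>
    if admissible d (zip u v) then r ^+ (sumn u + sumn v) else 0)).
  rewrite mulr_sumr; apply: eq_big_seq => v Hv.
  rewrite take_size_cat // E2 catA drop_size_cat; last by rewrite size_cat su sm.
  rewrite sumn_rev !sumn_cat; case: ifP => _; rewrite ?mulr0 //.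
  by rewrite !exprD; ring.
rewrite -sum_words4_expr /words4 mulr_suml exchange_big; apply: eq_bigr => mm _.
rewrite -mulr_sumr; congr (_ * _).
rewrite /admissible_sum -sum_words4_zip; apply: eq_big_seq => u Hu.
apply: eq_big_seq => v Hv.
by rewrite expr_sumn_zip // (size_words Hu) (size_words Hv).
Qed.

Lemma sum_words4_mid4 d L e :
  \sum_(x <- words4 (L + (1 + e)))
    (if (nth 0%N x L == 4%N) && admissible d (fold_pairs L (take L x))
     then r ^+ sumn x else 0)
  = (\sum_(pre <- words4 L)
       (if admissible d (fold_pairs L pre) then r ^+ sumn pre else 0))
    * r ^+ 4 * part_mass ^+ e.
Proof.
rewrite /words4 big_words_add mulr_suml mulr_suml; apply: eq_big_seq => pre Hp.
have sp := size_words Hp.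
rewrite big_words_add -(sum_words4_expr e) /words4 !big_cons big_nil addr0.
rewrite !mulr_sumr -!big_split /=; apply: eq_bigr => t _.
rewrite !nth_cat !sp ltnn subnn !take_size_cat // !sumn_cat /=.
by case: (admissible _ _); rewrite ?mul0r ?add0r ?addr0 // !exprD; ring.
Qed.

End CompositionWeights.

Lemma nsg_subadd x s t : nsg x -> 0 < s -> 0 < t -> s + t <= size x ->
  xj x (s + t) <= xj x s + xj x t.
Proof.
move=> /allP H s0 t0 st.
have /allP Hs := H s (ltac:(rewrite mem_iota; lia)).
have /implyP Hst := Hs t (ltac:(rewrite mem_iota; lia)).
by case/andP: (Hst (ltac:(lia))).
Qed.

Lemma size_fold_pairs L pre : size pre = L -> size (fold_pairs L pre) = L./2.
Proof.
by move=> sp; rewrite /fold_pairs size_zip size_take_min size_rev size_drop sp; lia.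
Qed.

Lemma nth_fold_pairs L pre j : size pre = L -> j < L./2 ->
  nth (0,0) (fold_pairs L pre) j = (nth 0 pre j, nth 0 pre (L - j.+1)).
Proof.
move=> sp hj; rewrite /fold_pairs nth_zip; last first.
  by rewrite size_take_min size_rev size_drop sp; lia.
rewrite nth_take // nth_rev; last by rewrite size_drop sp; lia.
by rewrite nth_drop size_drop sp; congr (_, nth _ _ _); lia.
Qed.

Section FoldedPrefix.
Variables (x : seq nat) (l : nat).
Hypotheses (x_nsg : nsg x) (l_gt0 : 0 < l) (l_le : l <= size x) (xl : xj x l = 4).

Let L := l.-1.
Let p := fold_pairs L (take L x).

Let subadd s t : 0 < s -> 0 < t -> s + t <= size x ->
  nth 0 x (s + t).-1 <= nth 0 x s.-1 + nth 0 x t.-1.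
Proof. exact: nsg_subadd. Qed.

Lemma size_prefix_pairs : size p = L./2.
Proof. by apply: size_fold_pairs; rewrite size_take_min; lia. Qed.

Lemma nth_prefix_pairs j : j < L./2 -> nth (0,0) p j = (nth 0 x j, nth 0 x (L - j.+1)).
Proof.
move=> hj; rewrite nth_fold_pairs ?size_take_min ?nth_take //; lia.
Qed.

(* x_l <= x_{j+1} + x_{l-j-1} *)
Lemma prefix_pairs_wide j : j < L./2 -> wide (nth (0,0) p j).
Proof.
move=> hj; rewrite nth_prefix_pairs // /wide /=.
have := @subadd j.+1 (L - j) ltac:(lia) ltac:(lia) ltac:(lia).
have -> : (j.+1 + (L - j)).-1 = L by rewrite /L; lia.
have -> : nth 0 x L = 4 by rewrite -xl /xj.
by have -> : (L - j).-1 = L - j.+1 by lia.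
Qed.

Lemma prefix_pairs_lagged d j : 0 < d -> nth 0 x d.-1 = 1 -> j + d < L./2 ->
  lagged (nth (0,0) p j) (nth (0,0) p (j + d)).
Proof.
move=> d0 xd hj; rewrite !nth_prefix_pairs /lagged /=; try lia.
apply/andP; split.
  have := @subadd j.+1 d ltac:(lia) d0 ltac:(rewrite /L in hj; lia).
  by rewrite xd addn1 addSn.
have := @subadd (L - (j + d)) d ltac:(lia) d0 ltac:(rewrite /L in hj *; lia).
have -> : (L - (j + d) + d).-1 = L - j.+1 by lia.
by rewrite xd; have -> : (L - (j + d)).-1 = L - (j + d).+1 by lia.
Qed.

Hypothesis x_comp : is_comp x.

Lemma prefix_pairs_admissible : admissible (find (fun c => c.1 == 1) p).+1 p.
Proof.
set i0 := find _ p.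
have i0_le : i0 <= L./2 by rewrite -size_prefix_pairs find_size.
rewrite /admissible /=; apply/and3P; split.
- apply/(all_nthP (0,0)) => j; rewrite size_take_min size_prefix_pairs => hj.
  rewrite nth_take; last by lia.
  have jx : j < size x by move: hj; rewrite /L; lia.
  have x0 : 0 < nth 0 x j by apply: (allP x_comp); apply: mem_nth.
  have := prefix_pairs_wide (ltac:(lia) : j < L./2).
  have := before_find (0,0) (ltac:(lia) : j < i0).
  by rewrite nth_prefix_pairs /wide2 /=; [move/negbT; lia | lia].
- apply/(all_nthP (0,0)) => j; rewrite size_drop size_prefix_pairs => hj.
  by rewrite nth_drop; apply: prefix_pairs_wide; lia.
case: (ltnP i0 L./2) => hi; last first.
  by rewrite drop_oversize ?lag_blocks_nil // size_prefix_pairs.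
have x1 : nth 0 x i0 = 1.
  have hp : has (fun c => c.1 == 1) p by rewrite has_find size_prefix_pairs.
  by have := nth_find (0,0) hp; rewrite -/i0 nth_prefix_pairs // => /eqP.
apply: lag_blocks_all => // j; rewrite size_drop size_prefix_pairs => hj.
rewrite !nth_drop addnA; apply: prefix_pairs_lagged => //; lia.
Qed.

End FoldedPrefix.

Section Constants.
Variable R : realFieldType.
Local Open Scope ring_scope.

(* [rho] is slightly above [1 / omega = 0.618...]; the values of [theta],
   [lambda] and [mu] are tuned so that the hypotheses of [admissible_sum_le]
   hold at [r = rho]. *)
Definition rho : R := 31%:R / 50%:R.
Definition theta : R := 93%:R / 100%:R.
Definition lambda : R := 116%:R / 100%:R.
Definition mu : R := 97%:R / 100%:R.

Lemma rho_ge0 : 0 <= rho. Proof. rewrite /rho; lra. Qed.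

Lemma wide_mass_rho : wide_mass rho <= lambda * theta.
Proof.
rewrite /wide_mass /pairs4 /= !big_cons big_nil /wide_weight /wide /pair_weight /=.
by rewrite /rho /lambda /theta; lra.
Qed.

Lemma wide2_mass_rho : wide2_mass rho * lambda <= mu.
Proof.
rewrite /wide2_mass /pairs4 /= !big_cons big_nil /wide2_weight /wide2 /wide /pair_weight /=.
by rewrite /rho /lambda /mu; lra.
Qed.

Lemma lagged_mass_rho : lagged_mass rho <= theta ^+ 2.
Proof.
rewrite /lagged_mass /pairs4 /= !big_cons !big_nil /lagged /wide_weight /wide /pair_weight /=.
by rewrite ?mul0r ?mulr0 ?addr0 ?add0r /rho /theta; lra.
Qed.

Lemma admissible_sum_rho d h : (0 < d)%N -> admissible_sum rho d h <= lambda * mu ^+ h.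
Proof.
apply: (@admissible_sum_le _ _ rho_ge0 theta);
  rewrite ?wide_mass_rho ?wide2_mass_rho ?lagged_mass_rho // /theta /lambda /mu; lra.
Qed.

Lemma part_mass_rhoE : part_mass rho = rho + rho ^+ 2 + rho ^+ 3 + rho ^+ 4.
Proof. by rewrite /part_mass /= !big_cons big_nil expr1 addr0 !addrA. Qed.

Lemma part_mass_rho_ge1 : 1 <= part_mass rho.
Proof. rewrite part_mass_rhoE /rho; lra. Qed.

Lemma part_mass_rho_ge0 : 0 <= part_mass rho.
Proof. exact: le_trans part_mass_rho_ge1. Qed.

(* [part_mass rho = 1.52...] while [mu ^+ 50 < 0.24] *)
Lemma mu50_part_mass_rho : mu ^+ 50 * part_mass rho <= 1.
Proof.
have mu10 : mu ^+ 10 <= 3%:R / 4%:R by rewrite /mu !exprS expr0; lra.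
have mu50 : mu ^+ 50 <= (3%:R / 4%:R) ^+ 5.
  rewrite (_ : 50%N = (10 * 5)%N) // exprM.
  by apply: lerXn2r; rewrite ?nnegrE ?exprn_ge0 //; rewrite /mu; lra.
have mu50_ge0 : 0 <= mu ^+ 50 by apply: exprn_ge0; rewrite /mu; lra.
rewrite part_mass_rhoE /rho.
move: mu50 mu50_ge0; set M := mu ^+ 50; rewrite !exprS expr0 => *.
nra.
Qed.

Lemma mu_part_mass_rho_exp h e : (50 * e <= h + 1)%N ->
  mu ^+ h * part_mass rho ^+ e <= part_mass rho.
Proof.
have mu0 : 0 <= mu by rewrite /mu; lra.
have mu1 : mu <= 1 by rewrite /mu; lra.
case: e => [|e] he.
  by rewrite expr0 mulr1; apply: le_trans part_mass_rho_ge1; apply: exprn_ile1.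
have h1 : mu ^+ h <= mu ^+ (50 * e) by apply: ler_wiXn2l => //; lia.
apply: le_trans (ler_wpM2r (exprn_ge0 _ part_mass_rho_ge0) h1) _.
rewrite exprS mulrCA exprM -exprMn ler_piMr ?part_mass_rho_ge0 //.
by apply: exprn_ile1; rewrite ?mulr_ge0 ?exprn_ge0 ?part_mass_rho_ge0 ?mu50_part_mass_rho.
Qed.

Definition C0 : R := part_mass rho ^+ 2 * lambda * rho ^+ 4.

Lemma C0_ge0 : 0 <= C0.
Proof.
by rewrite /C0 !mulr_ge0 ?exprn_ge0 ?part_mass_rho_ge0 ?rho_ge0 // /lambda; lra.
Qed.

(* The suffix after the last 4 is short, so its weight [part_mass rho ^+ e] is
   absorbed by the decay [mu ^+ h] of the folded prefix. *)
Lemma sum_mid4_rho n l d : (1 <= l <= n)%N -> (0 < d)%N -> (101 * (n - l) <= n)%N ->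
  \sum_(x <- words4 n)
    (if (nth 0%N x l.-1 == 4%N) && admissible d (fold_pairs l.-1 (take l.-1 x))
     then rho ^+ sumn x else 0) <= C0.
Proof.
move=> /andP[l1 ln] d0 hd.
rewrite {1}(_ : n = l.-1 + (1 + (n - l)))%N; last by lia.
rewrite sum_words4_mid4 sum_fold_admissible.
set L := l.-1; set h := L./2; set e := (n - l)%N.
have hF : part_mass rho ^+ (L - h - h) <= part_mass rho.
  by rewrite -[leRHS]expr1; apply: ler_weXn2l; rewrite ?part_mass_rho_ge1 // /h; lia.
have hmu : mu ^+ h * part_mass rho ^+ e <= part_mass rho.
  by apply: mu_part_mass_rho_exp; rewrite /e /h /L; lia.
have hG : part_mass rho ^+ (L - h - h) * admissible_sum rho d h
          <= part_mass rho * (lambda * mu ^+ h).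
  apply: ler_pM; rewrite ?exprn_ge0 ?part_mass_rho_ge0 ?admissible_sum_rho //.
  by rewrite /admissible_sum sumr_ge0 // => p _; case: ifP => // _;
     rewrite prodr_ge0 // => c _; rewrite exprn_ge0 ?rho_ge0.
apply: le_trans (ler_wpM2r (exprn_ge0 _ part_mass_rho_ge0)
  (ler_wpM2r (exprn_ge0 _ rho_ge0) hG)) _.
have -> : part_mass rho * (lambda * mu ^+ h) * rho ^+ 4 * part_mass rho ^+ e =
          (part_mass rho * lambda * rho ^+ 4) * (mu ^+ h * part_mass rho ^+ e) by ring.
have -> : C0 = (part_mass rho * lambda * rho ^+ 4) * part_mass rho.
  by rewrite /C0 expr2; ring.
by rewrite ler_wpM2l // !mulr_ge0 ?part_mass_rho_ge0 ?exprn_ge0 ?rho_ge0 // /lambda; lra.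
Qed.

End Constants.

Arguments rho {R}.
Arguments C0 {R}.

Lemma seqs_lenE n g : seqs_len n g = words (iota 0 g.+1) n.
Proof. by elim: n => //= n ->. Qed.

Lemma count_genus_le_words4 (P : pred (seq nat)) g :
  (forall x, P x -> all (fun k => k <= 4) x) ->
  count_genus P g <= \sum_(n <- iota 0 g.+1) count (fun x => P x && (sumn x == g)) (words4 n).
Proof.
move=> P4; rewrite /count_genus /candidates count_flatten -map_comp sumnE big_map.
apply: leq_sum => n _ /=; rewrite seqs_lenE -!size_filter.
apply: uniq_leq_size; first by rewrite filter_uniq // words_uniq // iota_uniq.
move=> x; rewrite !mem_filter => /andP[/and3P[xc /eqP xg xP] xw].
rewrite xP -xg eqxx /= /words4 mem_words (size_words xw) eqxx /=.
apply/allP => k xk; suff : k \in iota 1 4 by [].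
move/allP: (P4 x xP) => /(_ k xk).
by move/allP: xc => /(_ k xk); rewrite mem_iota; lia.
Qed.

Lemma fam_le4 (R : realType) (delta : R) x : fam delta x -> all (fun k => k <= 4) x.
Proof.
case/and3P=> _ /eqP xmax _; apply/allP => k xk.
by rewrite -xmax; apply: (@leq_bigmax_seq _ x xpredT id k).
Qed.

Section Counting.
Variable R : realFieldType.
Local Open Scope ring_scope.

Lemma natr_count_mul (T : eqType) (a : pred T) s (c : R) :
  (count a s)%:R * c = \sum_(x <- s) (if a x then c else 0).
Proof.
elim: s => [|y s IH]; first by rewrite big_nil mul0r.
by rewrite big_cons /= natrD mulrDl IH; case: (a y); rewrite ?mul1r ?mul0r.
Qed.

Lemma sumr_const_seq (T : Type) (s : seq T) (c : R) : \sum_(i <- s) c = (size s)%:R * c.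
Proof. by rewrite big_const_seq count_predT -Monoid.iteropE /= mulr_natl. Qed.

Lemma ler_sum_mem (T : eqType) s i (G : T -> R) :
  i \in s -> (forall j, 0 <= G j) -> G i <= \sum_(j <- s) G j.
Proof.
move=> si G0; rewrite (big_rem i) //= lerDl.
by apply: sumr_ge0 => j _; apply: G0.
Qed.

Definition fam_witness n l d (x : seq nat) :=
  [&& (101 * (n - l) <= n)%N, nth 0%N x l.-1 == 4%N
    & admissible d (fold_pairs l.-1 (take l.-1 x))].

Lemma witness_sum_le n l d : l \in iota 1 n -> d \in iota 1 n ->
  \sum_(x <- words4 n) (if fam_witness n l d x then rho ^+ sumn x else 0 : R) <= C0.
Proof.
rewrite !mem_iota /fam_witness => hl hd.
case: (ltnP n (101 * (n - l))) => hc; last by apply: sum_mid4_rho => //; lia.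
by rewrite big1 ?C0_ge0.
Qed.

End Counting.

Lemma fam_witness_exists (R : realType) n x : x \in words4 n -> fam (101%:R^-1 : R) x ->
  exists2 l, l \in iota 1 n & exists2 d, d \in iota 1 n & fam_witness n l d x.
Proof.
move=> xw /and3P[xnsg _ /hasP[l _ /and5P[l1 ln xl _ ldelta]]].
have sx := size_words xw.
have xcomp : is_comp x.
  apply/allP => k xk; move: xw; rewrite mem_words => /andP[_ /allP/(_ k xk) k4].
  by have : k \in iota 1 4 := k4; rewrite mem_iota => /andP[].
set d := (find (fun c => c.1 == 1%N) (fold_pairs l.-1 (take l.-1 x))).+1.
have ln' : (l <= n)%N by rewrite -sx.
exists l; first by rewrite mem_iota; lia.
exists d.
  rewrite mem_iota /d; have := find_size (fun c => c.1 == 1%N) (fold_pairs l.-1 (take l.-1 x)).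
  by rewrite size_prefix_pairs //; lia.
apply/and3P; split; last exact: prefix_pairs_admissible xnsg l1 ln (eqP xl) xcomp.
  by rewrite -(@ler_nat R) natrM -sx; move: ldelta; lra.
by rewrite -(eqP xl) /xj.
Qed.

Section FamilyBound.
Variable R : realType.
Local Open Scope ring_scope.
Local Notation delta := (101%:R^-1 : R).

Lemma le_sum_witness (I J : eqType) (s : seq I) (t : seq J) (P : I -> J -> bool) (c : R) :
  0 <= c -> (exists2 i, i \in s & exists2 j, j \in t & P i j) ->
  c <= \sum_(i <- s) \sum_(j <- t) (if P i j then c else 0).
Proof.
move=> c0 [i si [j tj Pij]].
have G0 i' j' : 0 <= (if P i' j' then c else 0) by case: ifP.
apply: le_trans (ler_sum_mem si (fun i' => sumr_ge0 _ (fun j' _ => G0 i' j'))).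
by apply: le_trans (ler_sum_mem tj (G0 i)); rewrite Pij.
Qed.

Lemma count_words4_fam_le n g : (n <= g)%N ->
  (count (fun x => fam delta x && (sumn x == g)) (words4 n))%:R * (rho : R) ^+ g
    <= ((g.+1) ^ 2)%:R * C0.
Proof.
move=> ng; rewrite natr_count_mul.
apply: le_trans (_ : \sum_(x <- words4 n) \sum_(l <- iota 1 n) \sum_(d <- iota 1 n)
   (if fam_witness n l d x then rho ^+ sumn x else 0 : R) <= _).
  rewrite big_seq [leRHS]big_seq; apply: ler_sum => x xw.
  case: ifP => [/andP[xfam /eqP <-]|_].
    apply: le_sum_witness; first by rewrite exprn_ge0 ?rho_ge0.
    exact: fam_witness_exists xw xfam.
  by apply: sumr_ge0 => l _; apply: sumr_ge0 => d _; case: ifP; rewrite ?exprn_ge0 ?rho_ge0.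
rewrite exchange_big; under eq_bigr do rewrite exchange_big.
apply: le_trans (_ : \sum_(l <- iota 1 n) \sum_(d <- iota 1 n) (C0 : R) <= _).
  rewrite big_seq [leRHS]big_seq; apply: ler_sum => l nl.
  rewrite big_seq [leRHS]big_seq; apply: ler_sum => d nd.
  exact: witness_sum_le.
rewrite !sumr_const_seq size_iota mulrA -natrM ler_wpM2r ?C0_ge0 // ler_nat.
by rewrite expnS expn1 leq_mul //; lia.
Qed.

Lemma count_genus_fam_le g :
  (count_genus (fam delta) g)%:R * (rho : R) ^+ g <= ((g.+1) ^ 3)%:R * C0.
Proof.
have := count_genus_le_words4 g (@fam_le4 R delta); rewrite -(@ler_nat R) => hc.
apply: le_trans (ler_wpM2r (exprn_ge0 g (@rho_ge0 R)) hc) _.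
rewrite natr_sum mulr_suml.
apply: le_trans (_ : \sum_(n <- iota 0 g.+1) ((g.+1) ^ 2)%:R * (C0 : R) <= _).
  by rewrite big_seq [leRHS]big_seq; apply: ler_sum => n; rewrite mem_iota => ng;
     apply: count_words4_fam_le; lia.
by rewrite sumr_const_seq size_iota mulrA -natrM -expnS.
Qed.

End FamilyBound.

Section PolynomialVersusExponential.
Variable R : archiRealFieldType.
Local Open Scope ring_scope.

Lemma bernoulli_ineq (x : R) k : 0 <= x -> 1 + k%:R * x <= (1 + x) ^+ k.
Proof.
move=> x0; elim: k => [|k IH]; first by rewrite mul0r addr0 expr0.
apply: le_trans (_ : (1 + x) * (1 + k%:R * x) <= _); last first.
  by rewrite exprS ler_wpM2l //; lra.
have k0 : 0 <= (k%:R : R) by apply: ler0n.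
by rewrite -natr1; nra.
Qed.

(* With [k = g %/ 4]: [(g + 1) ^ 3 C <= (8 k) ^ 3 C <= (k eps) ^ 4 <= (1 + eps) ^ (4 k)]
   once [k > 512 C / eps ^ 4]. *)
Lemma cubic_le_exp (C eps : R) : 0 <= C -> 0 < eps ->
  exists g0, forall g, (g0 <= g)%N -> ((g.+1) ^ 3)%:R * C <= (1 + eps) ^+ g.
Proof.
move=> C0 eps0.
have M0 : 0 <= 512%:R * C / eps ^+ 4.
  by apply: divr_ge0; [exact: mulr_ge0 (ler0n _ 512) C0 | exact/exprn_ge0/ltW].
set N := Num.Def.archi_bound (512%:R * C / eps ^+ 4).
exists (4 * N.+1)%N => g hg; set k := (g %/ 4)%N; set K : R := k%:R.
have hKN : 512%:R * C / eps ^+ 4 < K.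
  by apply: lt_le_trans (archi_boundP M0) _; rewrite ler_nat /k; lia.
have K0 : 0 <= K by apply: ler0n.
apply: le_trans (_ : (8%:R * K) ^+ 3 * C <= _).
  rewrite ler_wpM2r // natrX lerXn2r ?nnegrE ?mulr_ge0 ?ler0n //.
  by rewrite /K -natrM ler_nat /k; lia.
apply: le_trans (_ : (K * eps) ^+ 4 <= _).
  have -> : (8%:R * K) ^+ 3 * C = K ^+ 3 * (512%:R * C) by rewrite exprMn; ring.
  have -> : (K * eps) ^+ 4 = K ^+ 3 * (K * eps ^+ 4) by rewrite exprMn; ring.
  rewrite ler_wpM2l ?exprn_ge0 // -ler_pdivrMr ?exprn_gt0 //.
  exact: ltW.
apply: le_trans (_ : (1 + eps) ^+ (4 * k) <= _); last first.
  by apply: ler_weXn2l; [lra | rewrite /k; lia].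
rewrite mulnC exprM; apply: lerXn2r; rewrite ?nnegrE ?mulr_ge0 ?exprn_ge0 ?ler0n //; try lra.
by apply: le_trans (bernoulli_ineq k (ltW eps0)); rewrite /K; lra.
Qed.

End PolynomialVersusExponential.

Lemma growth_rate_le (R : realType) (P : pred (seq nat)) (beta : R) g0 :
  (0 <= beta)%R -> (forall g, g0 <= g -> ((count_genus P g)%:R <= beta ^+ g)%R) ->
  (growth_rate R P <= beta%:E)%E.
Proof.
move=> beta0 hc.
have root_le g : g0 <= g -> 0 < g -> ((count_genus P g)%:R `^ g%:R^-1 <= beta)%R.
  move=> hg g1; apply: le_trans (_ : (beta ^+ g) `^ g%:R^-1 <= _)%R.
    by apply: ge0_ler_powR; rewrite ?invr_ge0 ?ler0n ?nnegrE ?exprn_ge0 ?hc.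
  by rewrite -powR_mulrn // -powRrM mulfV ?powRr1 // pnatr_eq0 -lt0n.
rewrite /growth_rate limn_esup_lim; apply: lime_le; first exact: is_cvg_esups.
near=> m; apply: ge_ereal_sup => _ [k /= hk <-]; rewrite lee_fin.
apply: root_le; apply: leq_trans hk; near: m; [by exists g0 | by exists 1].
Unshelve. all: by end_near.
Qed.

Section Main.
Variable R : realType.
Local Open Scope ring_scope.

Let eps : R := 1000%:R^-1.

Lemma count_genus_fam_eventually :
  exists g0, forall g, (g0 <= g)%N ->
    (count_genus (fam (101%:R^-1 : R)) g)%:R <= ((1 + eps) / rho) ^+ g.
Proof.
have eps0 : 0 < eps by rewrite /eps invr_gt0 ltr0n.
have [g0 hg0] := cubic_le_exp (@C0_ge0 R) eps0.
exists g0 => g hg; have rho0 : (rho : R) != 0 by rewrite /rho; lra.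
rewrite exprMn exprVn ler_pdivlMr ?exprn_gt0 ?lt_def ?rho0 ?rho_ge0 //.
exact: le_trans (count_genus_fam_le R g) (hg0 g hg).
Qed.

Lemma growth_bound_lt_golden : (1 + eps) / rho < (1 + Num.sqrt 5) / 2.
Proof.
have h5 : 1382%:R / 620%:R < Num.sqrt 5 :> R.
  rewrite -[X in X < _]ger0_norm; last by lra.
  by rewrite -sqrtr_sqr ltr_sqrt ?expr2; lra.
by rewrite /eps /rho; lra.
Qed.

End Main.

Theorem proposition12p6 (R : realType) :
  exists delta : R, (0 < delta)%R /\
    (growth_rate R (fam delta) < ((1 + Num.sqrt 5) / 2)%:E)%E.
Proof.
exists (101%:R^-1)%R; split; first by rewrite invr_gt0 ltr0n.
have [g0 hg0] := count_genus_fam_eventually R.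
apply: le_lt_trans (growth_rate_le _ hg0) _; last by rewrite lte_fin growth_bound_lt_golden.
by apply: divr_ge0; [lra | exact: rho_ge0].
Qed.
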